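(* Let $1<g\in\mathbb{N}$ and let $\mathbf{X}=\bigcup_{i\ge1}X_i$ be a $g$-discrete self-similar fractal. For every $i\in\mathbb{Z}^+$, if $P_{\mathbf{X}}(i)$ holds then $P_{\mathbf{X}}(i+1)$ holds, where $P_{\mathbf{X}}(s)$ is the property: ''the full grid graph of $X_s$ is a tree and $nhb_{X_s}=nvb_{X_s}=1$''.
   Context: For $g\in\mathbb{N}$ write $\mathbb{N}_g=\{0,\dots,g-1\}$; for $A,B\subseteq\mathbb{N}^2$ and $k\in\mathbb{N}$, $A+kB=\{\vec m+k\vec n : \vec m\in A,\vec n\in B\}$. Let $1<g\in\mathbb{N}$. A set $\mathbf{X}\subset\mathbb{N}^2$ is a $g$-discrete self-similar fractal if there is a set $G$ with $\{(0,0)\}\subsetneq G\subsetneq\mathbb{N}_g^2$ having at least one point in every row and every column of $\mathbb{N}_g^2$ such that $\mathbf{X}=\bigcup_{i\ge1}X_i$, where $X_1=G$ and $X_{i+1}=X_i+g^iG$ ($X_i$ is the $i$-th stage). The full grid graph of $V\subseteq\mathbb{Z}^2$ has vertex set $V$ and an edge between $\vec x,\vec y$ iff $\|\vec x-\vec y\|=1$; a tree means this graph is connected and acyclic. For a finite $S\subseteq\mathbb{Z}^2$ let $l_S=\min_{(x,y)\in S}x$, $r_S=\max_{(x,y)\in S}x$, $b_S=\min_{(x,y)\in S}y$, $t_S=\max_{(x,y)\in S}y$. An h-bridge of $S$ is a subset of $S$ of the form $\{(l_S,y),(r_S,y)\}$; a v-bridge is a subset of $S$ of the form $\{(x,b_S),(x,t_S)\}$;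 $nhb_S$, $nvb_S$ denote their numbers. *)

(* Points of N^2 are pairs (nat * nat); finite subsets of N^2
   are represented by sequences (membership via \in; duplicates irrelevant). *)
From mathcomp Require Import all_boot.
Set Implicit Arguments. Unset Strict Implicit. Unset Printing Implicit Defensive.

Definition pt := (nat * nat)%type.

Definition padd (m n : pt) : pt := (m.1 + n.1, m.2 + n.2).
Definition pscale (k : nat) (n : pt) : pt := (k * n.1, k * n.2).

Definition valid_gen (g : nat) (G : seq pt) : Prop :=
  all (fun p : pt => (p.1 < g) && (p.2 < g)) G /\
  (0, 0) \in G /\
  (exists p : pt, p \in G /\ p != (0, 0)) /\
  (exists p : pt, [&& p.1 < g, p.2 < g & p \notin G]) /\
  (forall y, y < g -> exists x, (x, y) \in G) /\
  (forall x, x < g -> exists y, (x, y) \in G).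

(* stage_aux g G k = X_{k+1} *)
Fixpoint stage_aux (g : nat) (G : seq pt) (k : nat) : seq pt :=
  match k with
  | 0 => G
  | k'.+1 => [seq padd m (pscale (g ^ k'.+1) n) | m <- stage_aux g G k', n <- G]
  end.

(* stage g G i = X_i  for i >= 1 (X_1 = G, X_{i+1} = X_i + g^i G) *)
Definition stage (g : nat) (G : seq pt) (i : nat) : seq pt := stage_aux g G i.-1.

Definition adj (p q : pt) : bool :=
  ((p.1 == q.1) && ((p.2 == q.2.+1) || (q.2 == p.2.+1))) ||
  ((p.2 == q.2) && ((p.1 == q.1.+1) || (q.1 == p.1.+1))).

Definition grid_connected (S : seq pt) : Prop :=
  forall u v, u \in S -> v \in S ->
    exists p : seq pt, [&& path adj u p, last u p == v & all (mem S) p].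

Definition grid_acyclic (S : seq pt) : Prop :=
  ~ exists c : seq pt, [&& 3 <= size c, uniq c, all (mem S) c & cycle adj c].

Definition grid_tree (S : seq pt) : Prop := grid_connected S /\ grid_acyclic S.

Definition lS (S : seq pt) : nat := \big[minn/(head (0,0) S).1]_(p <- S) p.1.
Definition rS (S : seq pt) : nat := \max_(p <- S) p.1.
Definition bS (S : seq pt) : nat := \big[minn/(head (0,0) S).2]_(p <- S) p.2.
Definition tS (S : seq pt) : nat := \max_(p <- S) p.2.

(* number of h-bridges {(l_S,y),(r_S,y)} ⊆ S, i.e. number of such y *)
Definition nhb (S : seq pt) : nat :=
  size (undup [seq p.2 | p <- S & (p.1 == lS S) && ((rS S, p.2) \in S)]).
(* number of v-bridges {(x,b_S),(x,t_S)} ⊆ S, i.e. number of such x *)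
Definition nvb (S : seq pt) : nat :=
  size (undup [seq p.1 | p <- S & (p.2 == bS S) && ((p.1, tS S) \in S)]).

Definition Pprop (S : seq pt) : Prop := grid_tree S /\ nhb S = 1 /\ nvb S = 1.

From mathcomp Require Import all_boot zify.
Set Implicit Arguments. Unset Strict Implicit. Unset Printing Implicit Defensive.

(* X_(i+1) = X_i + g^i G places a copy of the tile X_i on every cell of the
   scaled generator.  Points of one copy are adjacent iff they are adjacent in X_i,
   and copies over two adjacent cells of G meet only along a bridge: when X_i has a
   single h-bridge and a single v-bridge there is exactly one grid edge between
   them, namely the one joining the two ends of that bridge.  Hence, if X_i and G
   are trees with one bridge of each kind, the sum is connected (walk inside copies,
   cross at bridges) and acyclic (a cycle either stays in one copy, or uses one of
   the crossing edges and then projects onto a closed walk of G that returns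
   without using that edge), and its bridges, which pair a bridge of X_i with a
   bridge of G, are again unique.  The hypotheses on G come from
   X_i = X_(i-1) + g^(i-1) G being such a tree: the cells of a connected sum form a
   connected set, G is contained in X_i, and the bridges of X_i are those of
   X_(i-1) paired with those of G. *)

Lemma divn_modn_MDl L q r : r < L -> (q * L + r) %/ L = q /\ (q * L + r) %% L = r.
Proof.
move=> rL; have L_gt0 : 0 < L by lia.
by rewrite divnMDl // divn_small // addn0 modnMDl modn_small.
Qed.

Lemma divn_modn_succ L x : 0 < L ->
  (x.+1 %/ L = x %/ L /\ x.+1 %% L = (x %% L).+1) \/
  (x.+1 %/ L = (x %/ L).+1 /\ x.+1 %% L = 0 /\ x %% L = L.-1).
Proof.
move=> L_gt0; have ex := divn_eq x L; have xL := ltn_pmod x L_gt0.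
case: (ltnP (x %% L).+1 L) => h.
- have -> : x.+1 = x %/ L * L + (x %% L).+1 by lia.
  by left; apply: divn_modn_MDl.
- have -> : x.+1 = (x %/ L).+1 * L + 0 by lia.
  by right; have [-> ->] := divn_modn_MDl (x %/ L).+1 L_gt0; lia.
Qed.

Lemma adjP p q : reflect ((p.1 = q.1 /\ (p.2 = q.2.+1 \/ q.2 = p.2.+1)) \/
  (p.2 = q.2 /\ (p.1 = q.1.+1 \/ q.1 = p.1.+1))) (adj p q).
Proof.
rewrite /adj; apply: (iffP idP).
- by case/orP=> /andP[/eqP h /orP[]/eqP h']; [left|left|right|right]; tauto.
- by case=> [][/eqP -> [] ->]; rewrite ?eqxx ?orbT.
Qed.

Lemma adj_sym p q : adj p q = adj q p.
Proof. by apply/adjP/adjP; lia. Qed.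

Lemma adj_irr p : adj p p = false.
Proof. by apply/adjP; lia. Qed.

Lemma adj_padd2r t p q : adj (padd p t) (padd q t) = adj p q.
Proof. by rewrite /padd; apply/adjP/adjP => /=; lia. Qed.

Definition adjeq (p q : pt) : bool := adj p q || (p == q).

Definition pdivn L (p : pt) : pt := (p.1 %/ L, p.2 %/ L).
Definition pmodn L (p : pt) : pt := (p.1 %% L, p.2 %% L).

Definition in_box L (W : pred pt) : Prop := forall p, W p -> p.1 < L /\ p.2 < L.

Lemma pdivn_pmodn_padd L w n : w.1 < L -> w.2 < L ->
  pdivn L (padd w (pscale L n)) = n /\ pmodn L (padd w (pscale L n)) = w.
Proof.
case: w n => [x y] [a b] /= xL yL.
rewrite /pdivn /pmodn /padd /pscale /= ![_ + L * _]addnC !(mulnC L).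
by have [-> ->] := divn_modn_MDl a xL; have [-> ->] := divn_modn_MDl b yL.
Qed.

Lemma padd_pmodn_pdivn L p : 0 < L -> padd (pmodn L p) (pscale L (pdivn L p)) = p.
Proof.
move=> L_gt0; rewrite /pdivn /pmodn /padd /pscale /=.
by case: p => a b /=; rewrite ![_ %% L + _]addnC !(mulnC L) -!divn_eq.
Qed.

Lemma adj_pdivn L p q : 0 < L -> adj p q -> adjeq (pdivn L p) (pdivn L q).
Proof.
move=> L_gt0 /adjP pq; rewrite /pdivn /adjeq.
case: p q pq => a b [c d] /= [][e []] ->; rewrite e ?eqxx /=.
- by case: (divn_modn_succ d L_gt0) => [][-> _]; rewrite /adj /= ?eqxx ?orbT.
- by case: (divn_modn_succ b L_gt0) => [][-> _]; rewrite /adj /= ?eqxx ?orbT.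
- by case: (divn_modn_succ c L_gt0) => [][-> _]; rewrite /adj /= ?eqxx ?orbT.
- by case: (divn_modn_succ a L_gt0) => [][-> _]; rewrite /adj /= ?eqxx ?orbT.
Qed.

Lemma adj_pmodn L p q : 0 < L -> adj p q -> pdivn L p = pdivn L q ->
  adj (pmodn L p) (pmodn L q).
Proof.
move=> L_gt0 /adjP pq; rewrite /pdivn /pmodn.
case: p q pq => a b [c d] /= [][e []] -> [E1 E2]; rewrite e in E1 E2 *.
- case: (divn_modn_succ d L_gt0) => [][h1 h2]; last by move: E2; rewrite h1; lia.
  by rewrite h2; apply/adjP => /=; lia.
- case: (divn_modn_succ b L_gt0) => [][h1 h2]; last by move: E2; rewrite h1; lia.
  by rewrite h2; apply/adjP => /=; lia.
- case: (divn_modn_succ c L_gt0) => [][h1 h2]; last by move: E1; rewrite h1; lia.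
  by rewrite h2; apply/adjP => /=; lia.
- case: (divn_modn_succ a L_gt0) => [][h1 h2]; last by move: E1; rewrite h1; lia.
  by rewrite h2; apply/adjP => /=; lia.
Qed.

Definition connected (A : pred pt) : Prop := forall u v, A u -> A v ->
  exists p, [&& path adj u p, last u p == v & all A p].

Definition acyclic (A : pred pt) : Prop :=
  ~ exists c, [&& 3 <= size c, uniq c, all A c & cycle adj c].

Lemma grid_treeE S : grid_tree S <-> connected (mem S) /\ acyclic (mem S).
Proof. by []. Qed.

Lemma eq_connected (A B : pred pt) : A =1 B -> connected A -> connected B.
Proof.
move=> eAB cA u v; rewrite -!eAB => Au Av; have [p] := cA u v Au Av.
by exists p; rewrite -(eq_all eAB).
Qed.

Lemma sub_acyclic (A B : pred pt) : (forall p, A p -> B p) -> acyclic B -> acyclic A.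
Proof.
move=> sAB aB [c /and4P[c3 uc Ac cc]]; apply: aB; exists c; rewrite c3 uc cc andbT.
by apply/allP=> z /(allP Ac)/sAB.
Qed.

Lemma path_map_in (T U : Type) (P : pred T) (e : rel T) (e' : rel U) (f : T -> U) x s :
  {in P &, forall a b, e a b -> e' (f a) (f b)} -> all P (x :: s) ->
  path e x s -> path e' (f x) (map f s).
Proof. by move=> ee' Ps ps; rewrite path_map; apply: (sub_in_path ee' Ps). Qed.

Lemma uniq_path_subrel (T : eqType) (e e' : rel T) x p :
  (forall a b, a != b -> e a b -> e' a b) -> uniq (x :: p) -> path e x p -> path e' x p.
Proof.
move=> ee'; elim: p x => //= y p IH x /andP[]; rewrite in_cons negb_or.
by case/andP=> nxy _ up /andP[exy py]; rewrite ee' // IH.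
Qed.

Lemma path_fun_eq (T : Type) (U : eqType) (f : T -> U) x s :
  path (fun a b => f a == f b) x s -> all (fun z => f z == f x) s.
Proof. by elim: s x => //= y s IH x /andP[/eqP -> /IH]; rewrite eqxx. Qed.

Lemma adjeq_path_shorten (A : pred pt) x s : path adjeq x s -> all A s ->
  exists p, [&& path adj x p, last x p == last x s & all A p].
Proof.
move=> ps As; case: (shortenP ps) => p pp up sub_p.
exists p; rewrite eqxx (uniq_path_subrel _ up pp) /=.
- by apply/allP=> z /sub_p /(allP As).
- by move=> a b nab /orP[] // /eqP eab; rewrite eab eqxx in nab.
Qed.

Definition adjeq_but (a b : pt) : rel pt := fun x y =>
  adjeq x y && ~~ ((x == a) && (y == b) || (x == b) && (y == a)).

Lemma acyclic_no_detour (A : pred pt) a b s : acyclic A -> A b -> adj a b ->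
  path (adjeq_but a b) b s -> last b s = a -> all A s -> False.
Proof.
move=> aA Ab ab ps + As; case: (shortenP ps) => p pp up sub_p last_p.
have nab : a != b by apply: contraTneq ab => ->; rewrite adj_irr.
apply: aA; exists (b :: p); rewrite up /= Ab.
apply/and3P; split.
- case: p pp {up sub_p} last_p => [|y [|z p]] //= + eya.
  + by rewrite eya eqxx in nab.
  + by rewrite eya /adjeq_but !eqxx orbT andbF.
- by apply/allP=> z /sub_p /(allP As).
- rewrite rcons_path last_p ab andbT.
  apply: uniq_path_subrel up pp => x y nxy /andP[/orP[] // /eqP exy].
  by rewrite exy eqxx in nxy.
Qed.

Lemma path_avoid (Q : pred pt) w s z : all (predC Q) s -> (s != [::]) || ~~ Q z ->
  path adj z (rcons s w) -> path (fun a b => adj a b && (~~ Q a || ~~ Q b)) z (rcons s w).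
Proof.
elim: s z => [|y s IH] z /=; first by move=> _ -> /andP[-> _].
case/andP=> Qy Qs _ /andP[-> ps]; rewrite Qy orbT /=.
by apply: IH => //; rewrite Qy orbT.
Qed.

(* [tiling W G L] is the paper's [W + L G]: a copy of the tile [W] placed at [L n]
   for every [n] in [G]; for [W] inside the [L]-box each point splits uniquely into
   an offset [pmodn L p] in the tile and a block [pdivn L p] in [G]. *)
Definition tiling (W G : pred pt) L : pred pt := fun p => W (pmodn L p) && G (pdivn L p).

Definition hbridge (W : pred pt) L y : bool := W (0, y) && W (L.-1, y).
Definition vbridge (W : pred pt) L x : bool := W (x, 0) && W (x, L.-1).

Definition unique_hbridge (A : pred pt) n : Prop :=
  exists y0, forall y, hbridge A n y = (y == y0).
Definition unique_vbridge (A : pred pt) n : Prop :=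
  exists x0, forall x, vbridge A n x = (x == x0).

Section Tiling.

Variables (W G : pred pt) (L : nat).
Hypothesis L_gt0 : 0 < L.
Hypothesis W_box : in_box L W.

Lemma pdivn_padd_tile w n : W w -> pdivn L (padd w (pscale L n)) = n.
Proof. by move=> /W_box[w1 w2]; have [] := pdivn_pmodn_padd n w1 w2. Qed.

Lemma tiling_padd w n : W w -> G n -> tiling W G L (padd w (pscale L n)).
Proof.
move=> Ww Gn; have [w1 w2] := W_box Ww; rewrite /tiling.
by have [-> ->] := pdivn_pmodn_padd n w1 w2; rewrite Ww Gn.
Qed.

Lemma connected_tiling_blocks : W (0, 0) -> connected (tiling W G L) -> connected G.
Proof.
move=> W00 cT u v Gu Gv.
have [p /and3P[pp lp Tp]] := cT _ _ (tiling_padd W00 Gu) (tiling_padd W00 Gv).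
have pm : path adjeq (pdivn L (padd (0, 0) (pscale L u))) (map (pdivn L) p).
  apply: (path_map_in (P := tiling W G L)) pp; last by rewrite /= tiling_padd.
  by move=> a b _ _; apply: adj_pdivn.
have Gp : all G (map (pdivn L) p) by rewrite all_map; apply/allP=> z /(allP Tp)/andP[].
have [q /and3P[pq lq Gq]] := adjeq_path_shorten pm Gp.
exists q; rewrite -{1 2}(pdivn_padd_tile u W00) pq Gq (eqP lq) last_map (eqP lp).
by rewrite pdivn_padd_tile ?eqxx.
Qed.

Lemma tiling_connected_block u v : connected W -> tiling W G L u -> tiling W G L v ->
  pdivn L u = pdivn L v -> exists p, [&& path adj u p, last u p == v & all (tiling W G L) p].
Proof.
move=> cW /andP[Wu Gu] /andP[Wv _] uv.
have [q /and3P[pq lq Wq]] := cW _ _ Wu Wv.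
pose shift w := padd w (pscale L (pdivn L u)).
exists (map shift q); apply/and3P; split.
- rewrite -[u in path _ u](padd_pmodn_pdivn u L_gt0) -/(shift _).
  apply: (path_map_in (P := predT)) pq; rewrite ?all_predT //.
  by move=> a b _ _; rewrite adj_padd2r.
- rewrite -[u in last u _](padd_pmodn_pdivn u L_gt0) -/(shift _) last_map (eqP lq).
  by rewrite /shift uv padd_pmodn_pdivn.
- by rewrite all_map; apply/allP=> w /(allP Wq) Ww; apply: tiling_padd.
Qed.

Lemma tiling_cross_edge x0 y0 n m : hbridge W L y0 -> vbridge W L x0 ->
  G n -> G m -> adj n m ->
  exists a b, [/\ tiling W G L a, tiling W G L b, adj a b, pdivn L a = n & pdivn L b = m].
Proof.
move=> /andP[h0 h1] /andP[v0 v1] Gn Gm /adjP nm.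
have edge w w' : W w -> W w' -> adj (padd w (pscale L n)) (padd w' (pscale L m)) ->
    exists a b, [/\ tiling W G L a, tiling W G L b, adj a b, pdivn L a = n & pdivn L b = m].
  move=> Ww Ww' ab; exists (padd w (pscale L n)), (padd w' (pscale L m)).
  by split; rewrite ?tiling_padd ?pdivn_padd_tile.
case: nm => [][e []] e'.
- by apply: (edge _ _ v0 v1); apply/adjP; rewrite /padd /pscale /= e e'; lia.
- by apply: (edge _ _ v1 v0); apply/adjP; rewrite /padd /pscale /= e e'; lia.
- by apply: (edge _ _ h0 h1); apply/adjP; rewrite /padd /pscale /= e e'; lia.
- by apply: (edge _ _ h1 h0); apply/adjP; rewrite /padd /pscale /= e e'; lia.
Qed.

Lemma connected_tiling x0 y0 : hbridge W L y0 -> vbridge W L x0 ->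
  connected W -> connected G -> connected (tiling W G L).
Proof.
move=> hW vW cW cG u v Tu Tv.
have [s /and3P[ps /eqP ls Gs]] := cG _ _ (andP Tu).2 (andP Tv).2.
suff along n : G n -> path adj n s -> all G s -> pdivn L v = last n s ->
    forall u, tiling W G L u -> pdivn L u = n ->
    exists p, [&& path adj u p, last u p == v & all (tiling W G L) p].
  by apply: (along _ (andP Tu).2) => //; rewrite ls.
elim: s n {u Tu ps Gs ls} => [|m s IH] n Gn /=.
  by move=> _ _ vn u Tu un; apply: tiling_connected_block => //; rewrite un.
case/andP=> nm ps /andP[Gm Gs] vs u Tu un.
have [a [b [Ta Tb ab an bm]]] := tiling_cross_edge hW vW Gn Gm nm.
have [p1 /and3P[pp1 lp1 Tp1]] := tiling_connected_block cW Tu Ta (etrans un (esym an)).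
have [p2 /and3P[pp2 lp2 Tp2]] := IH m Gm ps Gs vs b Tb bm.
exists (p1 ++ b :: p2); rewrite cat_path last_cat /= (eqP lp1) pp1 ab pp2 lp2 /=.
by rewrite all_cat Tp1 /= Tb Tp2.
Qed.

(* The only point of block [n] adjacent to the neighbouring block [m], when the tile
   has its horizontal bridge only in row [y0] and its vertical one only in column [x0]. *)
Definition cross_point x0 y0 (n m : pt) : pt :=
  if m == (n.1.+1, n.2) then padd (L.-1, y0) (pscale L n)
  else if n == (m.1.+1, m.2) then padd (0, y0) (pscale L n)
  else if m == (n.1, n.2.+1) then padd (x0, L.-1) (pscale L n)
  else padd (x0, 0) (pscale L n).

Lemma tiling_cross_pointE x0 y0 a b :
  (forall y, hbridge W L y -> y = y0) -> (forall x, vbridge W L x -> x = x0) ->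
  tiling W G L a -> tiling W G L b -> adj a b -> pdivn L a != pdivn L b ->
  a = cross_point x0 y0 (pdivn L a) (pdivn L b).
Proof.
move=> hW vW /andP[Wa _] /andP[Wb _] /adjP ab.
case: a b Wa Wb ab => [a1 a2] [b1 b2]; rewrite /pmodn /pdivn /= => Wa Wb ab nab.
have ea1 := divn_eq a1 L; have ea2 := divn_eq a2 L.
have eb1 := divn_eq b1 L; have eb2 := divn_eq b2 L.
case: ab => [][e []] e'; rewrite e e' in Wa Wb nab ea1 ea2 eb1 eb2 *.
- case: (divn_modn_succ b2 L_gt0) => [][d1 d2]; first by rewrite d1 eqxx in nab.
  case: d2 => m1 m2; rewrite m1 in Wa; rewrite m2 in Wb.
  have := vW (b1 %% L); rewrite /vbridge Wa Wb => /(_ isT) ex.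
  rewrite /cross_point /padd /pscale !xpair_eqE /=.
  by repeat case: ifP => ?; try lia; congr pair; lia.
- case: (divn_modn_succ a2 L_gt0) => [][d1 d2]; first by rewrite d1 eqxx in nab.
  case: d2 => m1 m2; rewrite m1 in Wb; rewrite m2 in Wa.
  have := vW (b1 %% L); rewrite /vbridge Wa Wb => /(_ isT) ex.
  rewrite /cross_point /padd /pscale !xpair_eqE /=.
  by repeat case: ifP => ?; try lia; congr pair; lia.
- case: (divn_modn_succ b1 L_gt0) => [][d1 d2]; first by rewrite d1 eqxx in nab.
  case: d2 => m1 m2; rewrite m1 in Wa; rewrite m2 in Wb.
  have := hW (b2 %% L); rewrite /hbridge Wa Wb => /(_ isT) ey.
  rewrite /cross_point /padd /pscale !xpair_eqE /=.
  by repeat case: ifP => ?; try lia; congr pair; lia.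
- case: (divn_modn_succ a1 L_gt0) => [][d1 d2]; first by rewrite d1 eqxx in nab.
  case: d2 => m1 m2; rewrite m1 in Wb; rewrite m2 in Wa.
  have := hW (b2 %% L); rewrite /hbridge Wa Wb => /(_ isT) ey.
  rewrite /cross_point /padd /pscale !xpair_eqE /=.
  by repeat case: ifP => ?; try lia; congr pair; lia.
Qed.

Lemma tiling_cycle_crosses c : acyclic W -> 3 <= size c -> uniq c ->
  all (tiling W G L) c -> cycle adj c -> has (fun z => pdivn L (next c z) != pdivn L z) c.
Proof.
move=> aW c3 uc Tc cc; apply/hasPn => same_block; apply: aW.
case: c c3 uc Tc cc same_block => [|h s] // c3 uc Tc cc same_block.
have cyc : cycle (fun a b => pdivn L a == pdivn L b) (h :: s).
  by apply: cycle_from_next => // z /same_block; rewrite negbK eq_sym.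
have hs : all (fun z => pdivn L z == pdivn L h) (h :: s).
  by have := path_fun_eq cyc; rewrite all_rcons /= eqxx => /andP[].
exists (map (pmodn L) (h :: s)); apply/and4P; split.
- by rewrite size_map.
- rewrite map_inj_in_uniq // => z1 z2 /(allP hs)/eqP e1 /(allP hs)/eqP e2 e.
  by rewrite -(padd_pmodn_pdivn z1 L_gt0) -(padd_pmodn_pdivn z2 L_gt0) e e1 e2.
- by rewrite all_map; apply/allP => z /(allP Tc)/andP[].
- rewrite /cycle /= -map_rcons.
  apply: (path_map_in (P := fun z => pdivn L z == pdivn L h)) cc.
  + by move=> a b /eqP ah /eqP bh ab; apply: adj_pmodn; rewrite ?ah ?bh.
  + by rewrite /= all_rcons eqxx; move: hs => /= /andP[].
Qed.

Lemma tiling_cross_unique x0 y0 a b u v :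
  (forall y, hbridge W L y -> y = y0) -> (forall x, vbridge W L x -> x = x0) ->
  tiling W G L a -> tiling W G L b -> tiling W G L u -> tiling W G L v ->
  adj a b -> adj u v -> pdivn L a = pdivn L u -> pdivn L b = pdivn L v ->
  pdivn L u != pdivn L v -> a = u.
Proof.
move=> hW vW Ta Tb Tu Tv ab uv au bv nuv.
rewrite (tiling_cross_pointE hW vW Ta Tb ab) ?au ?bv //.
by rewrite [RHS](tiling_cross_pointE hW vW Tu Tv uv).
Qed.

Lemma tiling_cross_not_in_cycle x0 y0 x y s :
  (forall y, hbridge W L y -> y = y0) -> (forall x, vbridge W L x -> x = x0) ->
  acyclic G -> all (tiling W G L) (x :: y :: s) -> uniq (x :: y :: s) -> s != [::] ->
  adj x y -> path adj y (rcons s x) -> pdivn L x != pdivn L y -> False.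
Proof.
move=> hW vW aG /and3P[Tx Ty Ts] /and3P[]; rewrite in_cons negb_or.
move=> /andP[nxy nxs] nys _ s0 xy ps nxy_blk.
have yx : adj y x by rewrite adj_sym.
have nyx_blk : pdivn L y != pdivn L x by rewrite eq_sym.
pose Q : pred pt := mem [:: x; y].
have Qs : all (predC Q) s.
  apply/allP => z zs; rewrite /= /Q !inE; apply/norP.
  by split; [apply: contraNneq _ nxs | apply: contraNneq _ nys] => <-.
have ps' := path_avoid Qs (introT orP (or_introl s0)) ps.
apply: (acyclic_no_detour (a := pdivn L x) (s := map (pdivn L) (rcons s x)) aG (andP Ty).2).
- by move: (adj_pdivn L_gt0 xy); rewrite /adjeq (negbTE nxy_blk) orbF.
- apply: (path_map_in (P := tiling W G L)) ps'; last by rewrite /= all_rcons Tx Ty /=.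
  move=> a b Ta Tb /andP[ab nQ]; rewrite /adjeq_but adj_pdivn //=.
  have ba : adj b a by rewrite adj_sym.
  apply: contraL nQ => /orP[] /andP[/eqP ea /eqP eb].
  + rewrite (tiling_cross_unique hW vW Ta Tb Tx Ty ab xy ea eb nxy_blk).
    rewrite (tiling_cross_unique hW vW Tb Ta Ty Tx ba yx eb ea nyx_blk).
    by rewrite /Q !inE !eqxx ?orbT.
  + rewrite (tiling_cross_unique hW vW Ta Tb Ty Tx ab yx ea eb nyx_blk).
    rewrite (tiling_cross_unique hW vW Tb Ta Tx Ty ba xy eb ea nxy_blk).
    by rewrite /Q !inE !eqxx ?orbT.
- by rewrite last_map last_rcons.
- by rewrite all_map all_rcons /= (andP Tx).2; apply/allP => z /(allP Ts)/andP[].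
Qed.

Lemma acyclic_tiling x0 y0 :
  (forall y, hbridge W L y -> y = y0) -> (forall x, vbridge W L x -> x = x0) ->
  acyclic W -> acyclic G -> acyclic (tiling W G L).
Proof.
move=> hW vW aW aG [c /and4P[c3 uc Tc cc]].
have /hasP[x xc nx] := tiling_cycle_crosses aW c3 uc Tc cc.
case: (rot_to xc) => i s ec.
have uc' : uniq (x :: s) by rewrite -ec rot_uniq.
have cc' : cycle adj (x :: s) by rewrite -ec rot_cycle.
have Ts : all (tiling W G L) (x :: s) by apply/allP => z; rewrite -ec mem_rot => /(allP Tc).
have c3' : 3 <= size (x :: s) by rewrite -ec size_rot.
have nxt : next (x :: s) x = next c x by rewrite -ec next_rot.
case: s {ec} uc' cc' Ts c3' nxt => [|y s] // uc' /andP[xy ps] Ts c3'.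
rewrite /= eqxx => nxt; rewrite -nxt eq_sym in nx.
by apply: (tiling_cross_not_in_cycle hW vW aG Ts uc' _ xy ps nx); case: s c3' {Ts uc' ps nxt}.
Qed.

Lemma hbridge_tiling g y : 0 < g ->
  hbridge (tiling W G L) (g * L) y = hbridge W L (y %% L) && hbridge G g (y %/ L).
Proof.
move=> g_gt0; rewrite /hbridge /tiling /pmodn /pdivn /= mod0n div0n.
have [-> ->] : (g * L).-1 %/ L = g.-1 /\ (g * L).-1 %% L = L.-1.
  have -> : (g * L).-1 = g.-1 * L + L.-1 by nia.
  by apply: divn_modn_MDl; lia.
by rewrite -!andbA; do 2!bool_congr.
Qed.

Lemma unique_hbridge_tiling g : 0 < g ->
  unique_hbridge W L -> unique_hbridge G g -> unique_hbridge (tiling W G L) (g * L).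
Proof.
move=> g_gt0 [yW hW] [yG hG]; exists (yG * L + yW) => y.
have yW_lt : yW < L by move: (hW yW); rewrite eqxx => /andP[/W_box[]].
have [eq_div eq_mod] := divn_modn_MDl yG yW_lt.
rewrite hbridge_tiling // hW hG; apply/andP/eqP => [[/eqP <- /eqP <-]|->].
  exact: divn_eq.
by rewrite eq_div eq_mod.
Qed.

Lemma unique_hbridge_blocks g : 0 < g ->
  unique_hbridge (tiling W G L) (g * L) -> unique_hbridge G g.
Proof.
move=> g_gt0 [yT hT]; exists (yT %/ L) => a.
have /andP[hW_yT hG_yT] : hbridge W L (yT %% L) && hbridge G g (yT %/ L).
  by rewrite -hbridge_tiling // hT.
apply/idP/eqP => [hG_a|->] //.
have [eq_div eq_mod] := divn_modn_MDl a (ltn_pmod yT L_gt0).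
have /eqP <- : a * L + yT %% L == yT by rewrite -hT hbridge_tiling // eq_div eq_mod hW_yT.
by rewrite eq_div.
Qed.

End Tiling.

Definition transpose_pred (A : pred pt) : pred pt := fun p => A (p.2, p.1).

Lemma in_box_transpose L W : in_box L W -> in_box L (transpose_pred W).
Proof. by move=> bW p /bW[]. Qed.

(* Vertical bridges of [tiling W G L] are the horizontal bridges of the transposed tiling. *)
Lemma unique_vbridge_tiling W G L g : 0 < L -> 0 < g -> in_box L W ->
  unique_vbridge W L -> unique_vbridge G g -> unique_vbridge (tiling W G L) (g * L).
Proof.
move=> L_gt0 g_gt0 /in_box_transpose bW.
exact: (unique_hbridge_tiling (W := transpose_pred W) (G := transpose_pred G)).
Qed.

Lemma unique_vbridge_blocks W G L g : 0 < L -> 0 < g ->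
  unique_vbridge (tiling W G L) (g * L) -> unique_vbridge G g.
Proof.
move=> L_gt0 g_gt0.
exact: (unique_hbridge_blocks (W := transpose_pred W) (G := transpose_pred G)).
Qed.

Definition tree_bridged (A : pred pt) n : Prop :=
  [/\ connected A, acyclic A, unique_hbridge A n & unique_vbridge A n].

Lemma tree_bridged_tiling W G L g : 0 < L -> 0 < g -> in_box L W ->
  tree_bridged W L -> tree_bridged G g -> tree_bridged (tiling W G L) (g * L).
Proof.
move=> L_gt0 g_gt0 bW [cW aW hW vW] [cG aG hG vG].
have [[y0 hy0] [x0 vx0]] := (hW, vW).
have hb : hbridge W L y0 by rewrite hy0.
have vb : vbridge W L x0 by rewrite vx0.
have hb_uniq y : hbridge W L y -> y = y0 by rewrite hy0 => /eqP.
have vb_uniq x : vbridge W L x -> x = x0 by rewrite vx0 => /eqP.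
split.
- exact: (connected_tiling L_gt0 bW hb vb).
- exact: (acyclic_tiling L_gt0 hb_uniq vb_uniq aW aG).
- exact: unique_hbridge_tiling.
- exact: unique_vbridge_tiling.
Qed.

Lemma tree_bridged_blocks W G L g : 0 < L -> 0 < g -> in_box L W -> W (0, 0) ->
  acyclic G -> tree_bridged (tiling W G L) (g * L) -> tree_bridged G g.
Proof.
move=> L_gt0 g_gt0 bW W00 aG [cT _ hT vT]; split=> //.
- exact: connected_tiling_blocks cT.
- exact: unique_hbridge_blocks hT.
- exact: unique_vbridge_blocks vT.
Qed.

(* [stage_pred g G k] is the stage [X_k]; starting from [X_0 = {(0,0)}] makes
   [X_(k+1) = X_k + g^k G] hold for every [k], with [X_1 = G]. *)
Fixpoint stage_pred g (G : pred pt) k : pred pt :=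
  if k is k'.+1 then tiling (stage_pred g G k') G (g ^ k') else pred1 (0, 0).

Section Stages.

Variables (g : nat) (G : pred pt).
Hypothesis g_gt0 : 0 < g.
Hypothesis G_box : in_box g G.

Lemma stage_pred_box k : in_box (g ^ k) (stage_pred g G k).
Proof.
case: k => [|k] p /=; first by move/eqP->.
by case/andP=> _ /G_box[]; rewrite /pdivn /= !ltn_divLR ?expn_gt0 ?g_gt0 // expnS mulnC.
Qed.

Lemma stage_pred_last_col k :
  (exists y, G (g.-1, y)) -> exists y, stage_pred g G k ((g ^ k).-1, y).
Proof.
move=> [yG Gy]; elim: k => [|k [y IH]]; first by exists 0.
have [_ y_lt] := stage_pred_box IH.
exists (y + g ^ k * yG).
have -> : ((g ^ k.+1).-1, y + g ^ k * yG) =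
    padd ((g ^ k).-1, y) (pscale (g ^ k) (g.-1, yG)).
  by rewrite /padd /pscale /= expnS; congr pair; have := expn_gt0 g k; rewrite g_gt0; nia.
exact: (tiling_padd (stage_pred_box (k := k)) IH Gy).
Qed.

Hypothesis G00 : G (0, 0).

Lemma stage_pred00 k : stage_pred g G k (0, 0).
Proof. by elim: k => //= k IH; rewrite /tiling /pmodn /pdivn /= mod0n div0n IH. Qed.

Lemma stage_pred_sub k p : stage_pred g G k p -> stage_pred g G k.+1 p.
Proof.
move=> Xp; have [p1 p2] := stage_pred_box Xp.
have := pdivn_pmodn_padd (0, 0) p1 p2.
rewrite /padd /pscale /= !muln0 !addn0 -surjective_pairing => -[pd pm].
by rewrite /= /tiling pd pm Xp.
Qed.

Lemma sub_stage_pred k p : G p -> stage_pred g G k.+1 p.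
Proof.
move=> Gp; elim: k => [|k]; last exact: stage_pred_sub.
by rewrite /= /tiling /pmodn /pdivn expn0 !modn1 !divn1 -surjective_pairing Gp.
Qed.

End Stages.

Lemma stage_pred_transpose g G k p :
  stage_pred g (transpose_pred G) k p = stage_pred g G k (p.2, p.1).
Proof.
elim: k p => [|k IH] p /=; last by rewrite /tiling IH.
by case: p => a b; rewrite /pred1 /= !xpair_eqE andbC.
Qed.

Lemma stage_pred_last_row g G k : 0 < g -> in_box g G -> (exists x, G (x, g.-1)) ->
  exists x, stage_pred g G k (x, (g ^ k).-1).
Proof.
move=> g_gt0 /in_box_transpose bG GX.
have [x] := stage_pred_last_col g_gt0 bG k GX.
by rewrite stage_pred_transpose; exists x.
Qed.

Lemma stage_predE g (G : seq pt) k p : 0 < g -> in_box g [in G] ->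
  (p \in stage_aux g G k) = stage_pred g [in G] k.+1 p.
Proof.
move=> g_gt0 G_box; elim: k p => [|k IH] p.
  by rewrite /= /tiling /pmodn /pdivn /= expn0 !modn1 !divn1 -surjective_pairing.
apply/allpairsP/idP => [[[m n]] /= [mX nG ->]|Xp].
  by rewrite IH in mX; apply: tiling_padd => //; exact: stage_pred_box.
exists (pmodn (g ^ k.+1) p, pdivn (g ^ k.+1) p) => /=; split.
- by rewrite IH; case/andP: Xp.
- by case/andP: Xp.
- by rewrite padd_pmodn_pdivn // expn_gt0 g_gt0.
Qed.

Lemma big_minn_seq_eq0 (T : eqType) (F : T -> nat) x0 (s : seq T) :
  (exists2 p, p \in s & F p = 0) -> \big[minn/x0]_(p <- s) F p = 0.
Proof.
elim: s => [[p]|a s IH [p]] //; rewrite big_cons in_cons => /orP[/eqP -> ->|ps Fp].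
  by rewrite min0n.
by rewrite IH ?minn0 //; exists p.
Qed.

Lemma big_max_seq_eq (T : eqType) (F : T -> nat) (s : seq T) M :
  (exists2 p, p \in s & F p = M) -> (forall p, p \in s -> F p <= M) ->
  \max_(p <- s) F p = M.
Proof.
move=> [p ps <-] ub; apply/eqP; rewrite eqn_leq (leq_bigmax_seq (P := predT)) // andbT.
by apply/bigmax_leqP_seq => q qs _; apply: ub.
Qed.

Lemma size_undup_eq1 (T : eqType) (s : seq T) :
  size (undup s) = 1 <-> exists y, forall z, (z \in s) = (z == y).
Proof.
split=> [|[y sy]].
  case E: (undup s) => [|y [|z t]] // _; exists y => z.
  by rewrite -mem_undup E mem_seq1.
suff /perm_size -> : perm_eq (undup s) [:: y] by [].
by apply: uniq_perm => // [|z]; rewrite ?undup_uniq // mem_undup sy mem_seq1.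
Qed.

Lemma nhb_eq1 S : nhb S = 1 <->
  exists y0, forall y, ((lS S, y) \in S) && ((rS S, y) \in S) = (y == y0).
Proof.
rewrite /nhb size_undup_eq1.
suff mem_bridges y : (y \in [seq p.2 | p <- S & (p.1 == lS S) && ((rS S, p.2) \in S)]) =
    ((lS S, y) \in S) && ((rS S, y) \in S).
  by split=> -[y0 H]; exists y0 => y; rewrite -H mem_bridges.
apply/mapP/andP => [[p]|[lSy rSy]].
  by rewrite mem_filter => /andP[/andP[/eqP <- ?] ?] ->; rewrite -surjective_pairing.
by exists (lS S, y); rewrite // mem_filter /= eqxx rSy lSy.
Qed.

Lemma nvb_eq1 S : nvb S = 1 <->
  exists x0, forall x, ((x, bS S) \in S) && ((x, tS S) \in S) = (x == x0).
Proof.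
rewrite /nvb size_undup_eq1.
suff mem_bridges x : (x \in [seq p.1 | p <- S & (p.2 == bS S) && ((p.1, tS S) \in S)]) =
    ((x, bS S) \in S) && ((x, tS S) \in S).
  by split=> -[x0 H]; exists x0 => x; rewrite -H mem_bridges.
apply/mapP/andP => [[p]|[bSx tSx]].
  by rewrite mem_filter => /andP[/andP[/eqP <- ?] ?] ->; rewrite -surjective_pairing.
by exists (x, bS S); rewrite // mem_filter /= eqxx tSx bSx.
Qed.

Lemma valid_gen_box g G : valid_gen g G -> in_box g [in G].
Proof. by case=> G_box _ p /(allP G_box)/andP. Qed.

Lemma stage_extremes g G k : 1 < g -> valid_gen g G ->
  [/\ lS (stage g G k.+1) = 0, rS (stage g G k.+1) = (g ^ k.+1).-1,
      bS (stage g G k.+1) = 0 & tS (stage g G k.+1) = (g ^ k.+1).-1].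
Proof.
move=> g_gt1 vG; have g_gt0 : 0 < g by lia.
have pred_g_lt : g.-1 < g by lia.
have G_box := valid_gen_box vG; case: vG => _ [G00 [_ [_ [G_row G_col]]]].
have XE p : (p \in stage g G k.+1) = stage_pred g [in G] k.+1 p.
  exact: stage_predE.
have X00 : (0, 0) \in stage g G k.+1 by rewrite XE stage_pred00.
have ub p : p \in stage g G k.+1 -> p.1 <= (g ^ k.+1).-1 /\ p.2 <= (g ^ k.+1).-1.
  by rewrite XE => /stage_pred_box[] // p1 p2; split; rewrite -ltnS prednK ?expn_gt0 ?g_gt0.
have [y Xy] := stage_pred_last_col g_gt0 G_box k.+1 (G_col _ pred_g_lt).
have [x Xx] := stage_pred_last_row k.+1 g_gt0 G_box (G_row _ pred_g_lt).
split; rewrite /lS /rS /bS /tS.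
- by apply: big_minn_seq_eq0; exists (0, 0).
- by apply: big_max_seq_eq => [|p /ub[]//]; exists ((g ^ k.+1).-1, y); rewrite ?XE.
- by apply: big_minn_seq_eq0; exists (0, 0).
- by apply: big_max_seq_eq => [|p /ub[]//]; exists (x, (g ^ k.+1).-1); rewrite ?XE.
Qed.

Lemma Pprop_stageE g G k : 1 < g -> valid_gen g G ->
  Pprop (stage g G k.+1) <-> tree_bridged (stage_pred g [in G] k.+1) (g ^ k.+1).
Proof.
move=> g_gt1 vG; have g_gt0 : 0 < g by lia.
rewrite /Pprop grid_treeE nhb_eq1 nvb_eq1.
have [-> -> -> ->] := stage_extremes k g_gt1 vG.
set S := stage g G k.+1; set X := stage_pred g [in G] k.+1.
have XE p : (p \in S) = X p := stage_predE k p g_gt0 (valid_gen_box vG).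
have bridgesE (P Q : nat -> pt) :
    (exists z0, forall z, (P z \in S) && (Q z \in S) = (z == z0)) <->
    (exists z0, forall z, X (P z) && X (Q z) = (z == z0)).
  by split=> -[z0 H]; exists z0 => z; rewrite -H !XE.
rewrite /tree_bridged /unique_hbridge /unique_vbridge /hbridge /vbridge !bridgesE.
split=> [[[cS aS] [hS vS]]|[cX aX hX vX]].
  split=> //; first exact: eq_connected cS.
  by apply: sub_acyclic aS => p; rewrite -XE.
split=> //; split.
- by apply: eq_connected cX => p; rewrite -XE.
- by apply: sub_acyclic aX => p; rewrite -XE.
Qed.

Theorem mainTheorem7 (g : nat) (G : seq pt) (hg : 1 < g) (hG : valid_gen g G)
  (i : nat) (hi : 0 < i) :
  Pprop (stage g G i) -> Pprop (stage g G i.+1).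
Proof.
case: i hi => // j _; rewrite !Pprop_stageE //.
have g_gt0 : 0 < g by lia.
have G_box := valid_gen_box hG; have [_ [G00 _]] := hG.
set X := stage_pred g [in G].
have X_box k : in_box (g ^ k) (X k) := stage_pred_box g_gt0 G_box (k := k).
have pow_gt0 k : 0 < g ^ k by rewrite expn_gt0 g_gt0.
move=> XY.
have G_tree : tree_bridged [in G] g.
  apply: (tree_bridged_blocks (pow_gt0 j) g_gt0 (X_box j) (stage_pred00 g G00 j)).
    by case: XY => _ aX _ _; apply: sub_acyclic aX => p; apply: sub_stage_pred.
  by rewrite -expnS.
by rewrite expnS; apply: tree_bridged_tiling.
Qed.
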